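(* Let all notions be as in the context. (1) If $(\Gamma,\mathsf{eval}\ e,S)\Longrightarrow^{*}(\Delta,\mathsf{eval}\ w,S)$ is a balanced evaluation (with $w$ a weak head normal form), then $\Gamma;\mathrm{upd}(S);e\Downarrow\Delta;w$. (2) If $(\Gamma,\mathsf{match}\ A\ m,S)\Longrightarrow^{*}(\Delta,\mathsf{match}\ [\,]\ r,S)$ is a balanced evaluation (with $r$ a matching result), then $\Gamma;\mathrm{upd}(S);A;m\Downarrow_M\Delta;r$.
   Context: The language $\lambda_{\mathrm{PMC}}$ (in normalized form). Expressions: $e ::= x \mid e\,y \mid \lambda m \mid c(y_1,\ldots,y_n)$, where $x,y,y_i$ are variables, $c$ ranges over constructors, and application arguments and constructor arguments are variables. Matchings: $m ::= \mathsf{ret}(e) \mid \mathsf{fail} \mid p \Rightarrow m \mid y \triangleright m \mid m_1 \mid m_2 \mid (m\ \mathsf{where}\ \{x_1=e_1;\ldots;x_n=e_n\})$ (return expression, failure, pattern match, argument supply, alternative, local possibly recursive bindings). Patterns: $p ::= x \mid c(p_1,\ldots,p_n)$ (patterns may be nested). The matching $y_1 \triangleright p_1 \Rightarrow \cdots \Rightarrow y_n \triangleright p_n \Rightarrow m$ associates to the right: $y_1 \triangleright (p_1 \Rightarrow (y_2 \triangleright (\cdots (p_n \Rightarrow m)\cdots)))$. $m[y/x]$ denotes capture-avoiding substitution of $y$ for free occurrences of $x$. Arity: $\mathrm{ar}(\mathsf{ret}(e))=0$, $\mathrm{ar}(\mathsf{fail})=0$, $\mathrm{ar}(p\Rightarrow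 m)=1+\mathrm{ar}(m)$, $\mathrm{ar}(y\triangleright m)=\max(0,\mathrm{ar}(m)-1)$, $\mathrm{ar}(m_1\mid m_2)=\mathrm{ar}(m_1)$ if $\mathrm{ar}(m_1)=\mathrm{ar}(m_2)$ (undefined otherwise), $\mathrm{ar}(m\ \mathsf{where}\ b)=\mathrm{ar}(m)$. Weak head normal forms: $w ::= \lambda m$ with $\mathrm{ar}(m)>0$, or $c(y_1,\ldots,y_n)$. Matching results: $r ::= \mathsf{ret}(e) \mid \mathsf{fail}$. A heap $\Gamma,\Delta,\Theta$ is a finite map from variables to expressions; $\Gamma[y\mapsto e]$ maps $y$ to $e$ and otherwise agrees with $\Gamma$. An argument stack $A$ is a list of variables; for such a list define $[\,]\triangleright e = e$ and $(y:ys)\triangleright e = ys \triangleright (e\,y)$. $L$ is a set of variables. Big-step semantics: two mutually inductive judgments $\Gamma;L;e \Downarrow \Delta;w$ and $\Gamma;L;A;m \Downarrow_M \Delta;r$ defined by the rules: (Whnf) $\Gamma;L;w \Downarrow \Gamma;w$. (Sat) if $\mathrm{ar}(m)=0$, $\Gamma;L;[\,];m \Downarrow_M \Delta;\mathsf{ret}(e)$ and $\Delta;L;e\Downarrow\Theta;w$, then $\Gamma;L;\lambda m \Downarrow \Theta;w$. (Var) if $\Gamma;L\cup\{y\};e \Downarrow \Delta;w$ then $\Gamma[y\mapsto e];L;y \Downarrow \Delta[y\mapsto w];w$. (App) if $\Gamma;L;e\Downarrow\Delta;\lambda m$ and $\Delta;L;\lambda(y\triangleright m)\Downarrow\Theta;w$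 then $\Gamma;L;(e\,y)\Downarrow\Theta;w$. (Return) $\Gamma;L;A;\mathsf{ret}(e)\Downarrow_M\Gamma;\mathsf{ret}(A\triangleright e)$. (Fail) $\Gamma;L;A;\mathsf{fail}\Downarrow_M\Gamma;\mathsf{fail}$. (Arg) if $\Gamma;L;(y:A);m\Downarrow_M\Delta;r$ then $\Gamma;L;A;y\triangleright m\Downarrow_M\Delta;r$. (Bind) if $\Gamma;L;A;m[y/x]\Downarrow_M\Delta;r$ then $\Gamma;L;(y:A);x\Rightarrow m\Downarrow_M\Delta;r$. (Cons1) if $\Gamma;L;y\Downarrow\Delta;c(y_1,\ldots,y_n)$ and $\Delta;L;A;y_1\triangleright p_1\Rightarrow\cdots\Rightarrow y_n\triangleright p_n\Rightarrow m\Downarrow_M\Theta;r$ then $\Gamma;L;(y:A);c(p_1,\ldots,p_n)\Rightarrow m\Downarrow_M\Theta;r$. (Cons2) if $\Gamma;L;y\Downarrow\Delta;c'(y_1,\ldots,y_k)$ with $c\neq c'$ then $\Gamma;L;(y:A);c(p_1,\ldots,p_n)\Rightarrow m\Downarrow_M\Delta;\mathsf{fail}$. (Alt1) if $\Gamma;L;A;m_1\Downarrow_M\Delta;\mathsf{ret}(e)$ then $\Gamma;L;A;(m_1\mid m_2)\Downarrow_M\Delta;\mathsf{ret}(e)$. (Alt2) if $\Gamma;L;A;m_1\Downarrow_M\Delta;\mathsf{fail}$ and $\Delta;L;A;m_2\Downarrow_M\Theta;r$ then $\Gamma;L;A;(m_1\mid m_2)\Downarrow_M\Theta;r$. (Where)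 if $\Gamma[y_i\mapsto\hat e_i];L;A;\hat m\Downarrow_M\Delta;r$ then $\Gamma;L;A;(m\ \mathsf{where}\ \{x_i=e_i\})\Downarrow_M\Delta;r$, where the $y_i$ are fresh (occur neither free nor bound in $\Gamma$, $L$, $A$, or $m$), $\hat e_i=e_i[y_1/x_1,\ldots,y_n/x_n]$ and $\hat m=m[y_1/x_1,\ldots,y_n/x_n]$. Abstract machine. Controls: $C ::= \mathsf{eval}\ e \mid \mathsf{match}\ A\ m$. Continuations: $k ::= y \mid\ !y \mid \$ \mid ?(A,m) \mid @(A, c(\vec p)\Rightarrow m)$. A return stack $S$ is a list of continuations. Configurations are triples $(\Gamma, C, S)$. Transitions $\Longrightarrow$: (App1) $(\Gamma,\mathsf{eval}\ (e\,y),S)\Longrightarrow(\Gamma,\mathsf{eval}\ e,y:S)$. (App2) $(\Gamma,\mathsf{eval}\ \lambda m,y:S)\Longrightarrow(\Gamma,\mathsf{eval}\ \lambda(y\triangleright m),S)$ if $\mathrm{ar}(m)>0$. (Sat) $(\Gamma,\mathsf{eval}\ \lambda m,S)\Longrightarrow(\Gamma,\mathsf{match}\ [\,]\ m,\$:S)$ if $\mathrm{ar}(m)=0$. (Var) $(\Gamma[y\mapsto e],\mathsf{eval}\ y,S)\Longrightarrow(\Gamma,\mathsf{eval}\ e,!y:S)$. (Update) $(\Gamma,\mathsf{eval}\ w,!y:S)\Longrightarrow(\Gamma[y\mapsto w],\mathsf{eval}\ w,S)$. (Return1A) $(\Gamma,\mathsf{match}\ A\ \mathsf{ret}(e),S)\Longrightarrow(\Gamma,\mathsf{match}\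 [\,]\ \mathsf{ret}(A\triangleright e),S)$ if $A\neq[\,]$. (Return1B) $(\Gamma,\mathsf{match}\ [\,]\ \mathsf{ret}(e),\$:S)\Longrightarrow(\Gamma,\mathsf{eval}\ e,S)$. (Return2) $(\Gamma,\mathsf{match}\ [\,]\ \mathsf{ret}(e),?(A',m):S)\Longrightarrow(\Gamma,\mathsf{match}\ [\,]\ \mathsf{ret}(e),S)$. (Bind) $(\Gamma,\mathsf{match}\ (y:A)\ (x\Rightarrow m),S)\Longrightarrow(\Gamma,\mathsf{match}\ A\ m[y/x],S)$. (Cons1) $(\Gamma,\mathsf{match}\ (y:A)\ (c(\vec p)\Rightarrow m),S)\Longrightarrow(\Gamma,\mathsf{eval}\ y,@(A,c(\vec p)\Rightarrow m):S)$. (Cons2) $(\Gamma,\mathsf{eval}\ c(y_1,\ldots,y_n),@(A,c(p_1,\ldots,p_n)\Rightarrow m):S)\Longrightarrow(\Gamma,\mathsf{match}\ A\ (y_1\triangleright p_1\Rightarrow\cdots\Rightarrow y_n\triangleright p_n\Rightarrow m),S)$. (Fail) $(\Gamma,\mathsf{eval}\ c'(y_1,\ldots,y_k),@(A,c(p_1,\ldots,p_n)\Rightarrow m):S)\Longrightarrow(\Gamma,\mathsf{match}\ [\,]\ \mathsf{fail},S)$ if $c\neq c'$. (Arg) $(\Gamma,\mathsf{match}\ A\ (y\triangleright m),S)\Longrightarrow(\Gamma,\mathsf{match}\ (y:A)\ m,S)$. (Alt1) $(\Gamma,\mathsf{match}\ A\ (m_1\mid m_2),S)\Longrightarrow(\Gamma,\mathsf{match}\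 A\ m_1,?(A,m_2):S)$. (Alt2) $(\Gamma,\mathsf{match}\ A'\ \mathsf{fail},?(A,m):S)\Longrightarrow(\Gamma,\mathsf{match}\ A\ m,S)$. (Where) $(\Gamma,\mathsf{match}\ A\ (m\ \mathsf{where}\ \{x_i=e_i\}),S)\Longrightarrow(\Gamma[y_i\mapsto\hat e_i],\mathsf{match}\ A\ \hat m,S)$ with $y_i$ fresh, $\hat e_i=e_i[y_1/x_1,\ldots,y_n/x_n]$, $\hat m=m[y_1/x_1,\ldots,y_n/x_n]$. $\Longrightarrow^{*}$ is the reflexive–transitive closure of $\Longrightarrow$. A sequence of transitions $(\Gamma,C,S)\Longrightarrow^{*}(\Delta,C',S)$ is balanced if the initial and final return stacks are identical and every intermediate return stack has the form $k_1:k_2:\cdots:k_n:S$ (an extension of the initial stack). For a return stack $S$, $\mathrm{upd}(S)=\{y : (!y)\in S\}$ is the set of variables marked for update in $S$. *)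

From Stdlib Require Import List Arith PeanoNat.
Import ListNotations.

Definition var := nat.
Definition con := nat.

Inductive pat : Type :=
| PVar (x : var)
| PCon (c : con) (ps : list pat).

Inductive expr : Type :=
| EVar (x : var)
| EApp (e : expr) (y : var)
| ELam (m : matching)
| ECon (c : con) (ys : list var)
with matching : Type :=
| MRet (e : expr)
| MFail
| MPat (p : pat) (m : matching)
| MArg (y : var) (m : matching)
| MAlt (m1 m2 : matching)
| MWhere (m : matching) (b : list (var * expr)).

Inductive result : Type := RRet (e : expr) | RFail.
Definition of_result (r : result) : matching :=
  match r with RRet e => MRet e | RFail => MFail end.

Fixpoint pvars (p : pat) : list var :=
  match p with
  | PVar x => [x]
  | PCon _ ps => flat_map pvars ps
  end.

Fixpoint vars_e (e : expr) : list var :=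
  match e with
  | EVar x => [x]
  | EApp e y => y :: vars_e e
  | ELam m => vars_m m
  | ECon _ ys => ys
  end
with vars_m (m : matching) : list var :=
  match m with
  | MRet e => vars_e e
  | MFail => []
  | MPat p m => pvars p ++ vars_m m
  | MArg y m => y :: vars_m m
  | MAlt m1 m2 => vars_m m1 ++ vars_m m2
  | MWhere m b =>
      vars_m m ++ flat_map (fun xe => match xe with (x, e) => x :: vars_e e end) b
  end.

(** Capture-avoiding simultaneous renaming.  Every binder is renamed to a
    name strictly larger than the image under the renaming of every variable
    occurring in its scope, so no capture can happen. *)
Fixpoint idx (x : var) (l : list var) : option nat :=
  match l with
  | [] => None
  | y :: l' => if Nat.eqb x y then Some 0
               else match idx x l' with Some i => Some (S i) | None => None end
  end.

Definition extend (s : var -> var) (xs : list var) (base : nat) (v : var) : var :=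
  match idx v xs with Some i => base + i | None => s v end.

Definition fresh_base (s : var -> var) (l : list var) : nat :=
  S (fold_right (fun v acc => Nat.max (s v) acc) 0 l).

Fixpoint ren_p (s : var -> var) (p : pat) : pat :=
  match p with
  | PVar x => PVar (s x)
  | PCon c ps => PCon c (map (ren_p s) ps)
  end.

Fixpoint ren_e (s : var -> var) (e : expr) : expr :=
  match e with
  | EVar x => EVar (s x)
  | EApp e y => EApp (ren_e s e) (s y)
  | ELam m => ELam (ren_m s m)
  | ECon c ys => ECon c (map s ys)
  end
with ren_m (s : var -> var) (m : matching) : matching :=
  match m with
  | MRet e => MRet (ren_e s e)
  | MFail => MFail
  | MPat p m' =>
      let s' := extend s (pvars p) (fresh_base s (vars_m (MPat p m'))) in
      MPat (ren_p s' p) (ren_m s' m')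
  | MArg y m' => MArg (s y) (ren_m s m')
  | MAlt m1 m2 => MAlt (ren_m s m1) (ren_m s m2)
  | MWhere m' b =>
      let s' := extend s (map fst b) (fresh_base s (vars_m (MWhere m' b))) in
      MWhere (ren_m s' m')
             (map (fun xe => match xe with (x, e) => (s' x, ren_e s' e) end) b)
  end.

Definition sim_ren (ys xs : list var) (v : var) : var :=
  match idx v xs with Some i => nth i ys v | None => v end.

Definition subst_m (y x : var) (m : matching) : matching :=
  ren_m (fun v => if Nat.eqb v x then y else v) m.

(** Arity (None = undefined). *)
Fixpoint ar (m : matching) : option nat :=
  match m with
  | MRet _ => Some 0
  | MFail => Some 0
  | MPat _ m => option_map S (ar m)
  | MArg _ m => option_map (fun k => k - 1) (ar m)
  | MAlt m1 m2 =>
      match ar m1, ar m2 with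
      | Some a, Some b => if Nat.eqb a b then Some a else None
      | _, _ => None
      end
  | MWhere m _ => ar m
  end.

Definition is_whnf (e : expr) : Prop :=
  match e with
  | ELam m => exists k, ar m = Some (S k)
  | ECon _ _ => True
  | _ => False
  end.

Definition heap := var -> option expr.
Definition finite_heap (H : heap) : Prop :=
  exists N, forall v, N <= v -> H v = None.
Definition hupd (H : heap) (y : var) (e : expr) : heap :=
  fun v => if Nat.eqb v y then Some e else H v.
Definition hupds (H : heap) (ys : list var) (es : list expr) : heap :=
  fold_right (fun ye H' => hupd H' (fst ye) (snd ye)) H (combine ys es).

Definition app_args (A : list var) (e : expr) : expr :=
  fold_left (fun e y => EApp e y) A e.

Fixpoint chain (ys : list var) (ps : list pat) (m : matching) : matching :=
  match ys, ps with
  | y :: ys', p :: ps' => MArg y (MPat p (chain ys' ps' m))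
  | _, _ => m
  end.

Definition fresh_heap (y : var) (H : heap) : Prop :=
  forall z e, H z = Some e -> z <> y /\ ~ In y (vars_e e).

(** Big-step semantics.  L is a set of variables represented as a list
    (only membership is observed; L u {y} is y :: L). *)
Inductive bs : heap -> list var -> expr -> heap -> expr -> Prop :=
| BS_Whnf G L w :
    is_whnf w -> bs G L w G w
| BS_Sat G L m D e T w :
    ar m = Some 0 -> bsm G L [] m D (RRet e) -> bs D L e T w ->
    bs G L (ELam m) T w
| BS_Var G L y e D w :
    bs G (y :: L) e D w -> bs (hupd G y e) L (EVar y) (hupd D y w) w
| BS_App G L e y D m T w :
    bs G L e D (ELam m) -> bs D L (ELam (MArg y m)) T w ->
    bs G L (EApp e y) T w
with bsm : heap -> list var -> list var -> matching -> heap -> result -> Prop :=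
| BSM_Return G L A e :
    bsm G L A (MRet e) G (RRet (app_args A e))
| BSM_Fail G L A :
    bsm G L A MFail G RFail
| BSM_Arg G L A y m D r :
    bsm G L (y :: A) m D r -> bsm G L A (MArg y m) D r
| BSM_Bind G L y A x m D r :
    bsm G L A (subst_m y x m) D r -> bsm G L (y :: A) (MPat (PVar x) m) D r
| BSM_Cons1 G L y A c ps m D ys T r :
    length ys = length ps ->
    bs G L (EVar y) D (ECon c ys) ->
    bsm D L A (chain ys ps m) T r ->
    bsm G L (y :: A) (MPat (PCon c ps) m) T r
| BSM_Cons2 G L y A c ps m D c' ys :
    c <> c' ->
    bs G L (EVar y) D (ECon c' ys) ->
    bsm G L (y :: A) (MPat (PCon c ps) m) D RFail
| BSM_Alt1 G L A m1 m2 D e :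
    bsm G L A m1 D (RRet e) -> bsm G L A (MAlt m1 m2) D (RRet e)
| BSM_Alt2 G L A m1 m2 D T r :
    bsm G L A m1 D RFail -> bsm D L A m2 T r -> bsm G L A (MAlt m1 m2) T r
| BSM_Where G L A m b ys D r :
    length ys = length b -> NoDup ys ->
    (forall y, In y ys ->
       fresh_heap y G /\ ~ In y L /\ ~ In y A /\ ~ In y (vars_m (MWhere m b))) ->
    bsm (hupds G ys (map (fun xe => ren_e (sim_ren ys (map fst b)) (snd xe)) b))
        L A (ren_m (sim_ren ys (map fst b)) m) D r ->
    bsm G L A (MWhere m b) D r.

Inductive control : Type :=
| CEval (e : expr)
| CMatch (A : list var) (m : matching).

Inductive cont : Type :=
| KArg (y : var)
| KUpd (y : var)                                      (* !y *)
| KSat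
| KAlt (A : list var) (m : matching)
| KCons (A : list var) (c : con) (ps : list pat) (m : matching).

Definition stack := list cont.
Definition config : Type := (heap * control * stack)%type.

Definition vars_k (k : cont) : list var :=
  match k with
  | KArg y => [y]
  | KUpd y => [y]
  | KSat => []
  | KAlt A m => A ++ vars_m m
  | KCons A c ps m => A ++ vars_m (MPat (PCon c ps) m)
  end.

Definition vars_stack (St : stack) : list var := flat_map vars_k St.

Fixpoint upd (St : stack) : list var :=
  match St with
  | [] => []
  | KUpd y :: St' => y :: upd St'
  | _ :: St' => upd St'
  end.

Inductive step : config -> config -> Prop :=
| ST_App1 G e y St :
    step (G, CEval (EApp e y), St) (G, CEval e, KArg y :: St)
| ST_App2 G m y St k :
    ar m = Some (Datatypes.S k) ->
    step (G, CEval (ELam m), KArg y :: St) (G, CEval (ELam (MArg y m)), St)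
| ST_Sat G m St :
    ar m = Some 0 ->
    step (G, CEval (ELam m), St) (G, CMatch [] m, KSat :: St)
| ST_Var G y e St :
    step (hupd G y e, CEval (EVar y), St) (G, CEval e, KUpd y :: St)
| ST_Update G w y St :
    is_whnf w ->
    step (G, CEval w, KUpd y :: St) (hupd G y w, CEval w, St)
| ST_Return1A G A e St :
    A <> [] ->
    step (G, CMatch A (MRet e), St) (G, CMatch [] (MRet (app_args A e)), St)
| ST_Return1B G e St :
    step (G, CMatch [] (MRet e), KSat :: St) (G, CEval e, St)
| ST_Return2 G e A' m St :
    step (G, CMatch [] (MRet e), KAlt A' m :: St) (G, CMatch [] (MRet e), St)
| ST_Bind G y A x m St :
    step (G, CMatch (y :: A) (MPat (PVar x) m), St) (G, CMatch A (subst_m y x m), St)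
| ST_Cons1 G y A c ps m St :
    step (G, CMatch (y :: A) (MPat (PCon c ps) m), St)
         (G, CEval (EVar y), KCons A c ps m :: St)
| ST_Cons2 G c ys A ps m St :
    length ys = length ps ->
    step (G, CEval (ECon c ys), KCons A c ps m :: St) (G, CMatch A (chain ys ps m), St)
| ST_Fail G c' ys A c ps m St :
    c <> c' ->
    step (G, CEval (ECon c' ys), KCons A c ps m :: St) (G, CMatch [] MFail, St)
| ST_Arg G A y m St :
    step (G, CMatch A (MArg y m), St) (G, CMatch (y :: A) m, St)
| ST_Alt1 G A m1 m2 St :
    step (G, CMatch A (MAlt m1 m2), St) (G, CMatch A m1, KAlt A m2 :: St)
| ST_Alt2 G A' A m St :
    step (G, CMatch A' MFail, KAlt A m :: St) (G, CMatch A m, St)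
| ST_Where G A m b ys St :
    length ys = length b -> NoDup ys ->
    (forall y, In y ys ->
       fresh_heap y G /\ ~ In y A /\ ~ In y (vars_m (MWhere m b)) /\
       ~ In y (vars_stack St)) ->
    step (G, CMatch A (MWhere m b), St)
         (hupds G ys (map (fun xe => ren_e (sim_ren ys (map fst b)) (snd xe)) b),
          CMatch A (ren_m (sim_ren ys (map fst b)) m), St).

Definition extends (St : stack) (St' : stack) : Prop := exists ks, St' = ks ++ St.

Definition cstack (c : config) : stack := match c with (_, _, St) => St end.

Inductive steps_above (St : stack) : config -> config -> Prop :=
| SA_refl c : extends St (cstack c) -> steps_above St c c
| SA_step c c' c'' :
    extends St (cstack c) -> step c c' -> steps_above St c' c'' ->
    steps_above St c c''.

Definition balanced (G : heap) (C : control) (St : stack) (D : heap) (C' : control) : Prop :=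
  steps_above St (G, C, St) (D, C', St).

From Stdlib Require Import List Lia Wf_nat.
Import ListNotations.

(* Strong induction on the length of the balanced run.  A machine transition
   that pushes a continuation k onto S is matched by the first later
   transition that pops k again; the run in between is balanced over k :: S
   and strictly shorter, so the induction hypothesis applies to it, and so it
   does to the rest of the run after the pop.  Since upd (k :: S) = upd S
   except for k = !y, where it is y :: upd S, the set L of the big-step
   judgement grows exactly as in rule (Var).  Which transition pops k decides
   which big-step rule to apply; the configurations eval w and match [] r are
   final, since every transition out of them pops below S. *)

Inductive nsteps_above (St : stack) : nat -> config -> config -> Prop :=
| nsteps_above_refl c :
    extends St (cstack c) -> nsteps_above St 0 c c
| nsteps_above_step n c c' c'' :
    extends St (cstack c) -> step c c' -> nsteps_above St n c' c'' ->
    nsteps_above St (S n) c c''.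

Lemma steps_above_nsteps St c c' :
  steps_above St c c' -> exists n, nsteps_above St n c c'.
Proof.
  induction 1 as [|c c' c'' Hext Hstep _ [n Hn]]; eauto using nsteps_above.
Qed.

Lemma nsteps_above_extends St n c c' :
  nsteps_above St n c c' -> extends St (cstack c).
Proof. now destruct 1. Qed.

Lemma extends_length St St' : extends St St' -> length St <= length St'.
Proof. intros [ks ->]. rewrite length_app. lia. Qed.

Lemma not_extends_cons k St : ~ extends (k :: St) St.
Proof. intros Hext. apply extends_length in Hext. simpl in Hext. lia. Qed.

Lemma step_stack_cases c c' :
  step c c' ->
  cstack c' = cstack c \/
  (exists k, cstack c' = k :: cstack c) \/
  (exists k, cstack c = k :: cstack c').
Proof.
  destruct 1; simpl; eauto.
Qed.

Lemma nsteps_above_first_pop k St n c c'' :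
  nsteps_above St n c c'' -> extends (k :: St) (cstack c) -> cstack c'' = St ->
  exists n1 n2 c1 c2,
    nsteps_above (k :: St) n1 c c1 /\ cstack c1 = k :: St /\ step c1 c2 /\
    cstack c2 = St /\ nsteps_above St n2 c2 c'' /\ n = n1 + S n2.
Proof.
  induction 1 as [c _ | n c c' c'' _ Hstep Hrest IH]; intros [ks Hks] Hend.
  - exfalso. apply (not_extends_cons k St). exists ks. congruence.
  - assert (Hcont : extends (k :: St) (cstack c') ->
              exists n1 n2 c1 c2,
                nsteps_above (k :: St) n1 c c1 /\ cstack c1 = k :: St /\
                step c1 c2 /\ cstack c2 = St /\ nsteps_above St n2 c2 c'' /\
                S n = n1 + S n2).
    { intros Hext'.
      destruct (IH Hext' Hend) as (n1 & n2 & c1 & c2 & Hin & ? & ? & ? & ? & ->).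
      exists (S n1), n2, c1, c2. repeat split; auto.
      apply nsteps_above_step with c'; auto. exists ks. assumption. }
    destruct (step_stack_cases _ _ Hstep) as [Hc' | [[x Hc'] | [x Hc]]].
    + apply Hcont. exists ks. congruence.
    + apply Hcont. exists (x :: ks). rewrite Hc', Hks. reflexivity.
    + rewrite Hks in Hc.
      destruct ks as [|x' ks]; simpl in Hc; injection Hc as -> Hc.
      * exists 0, n, c, c'.
        repeat split; auto. apply nsteps_above_refl. exists []. assumption.
      * apply Hcont. exists ks. congruence.
Qed.

Lemma nsteps_above_push_split k St n G C c'' :
  nsteps_above St n (G, C, k :: St) c'' -> cstack c'' = St ->
  exists n1 n2 G1 C1 G2 C2,
    nsteps_above (k :: St) n1 (G, C, k :: St) (G1, C1, k :: St) /\
    step (G1, C1, k :: St) (G2, C2, St) /\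
    nsteps_above St n2 (G2, C2, St) c'' /\ n = n1 + S n2.
Proof.
  intros Hrun Hend.
  destruct (nsteps_above_first_pop k St n _ _ Hrun (ex_intro _ [] eq_refl) Hend)
    as (n1 & n2 & [[G1 C1] St1] & [[G2 C2] St2] & Hin & E1 & Hpop & E2 & Hout & ->).
  simpl in E1, E2; subst St1 St2.
  now exists n1, n2, G1, C1, G2, C2.
Qed.

Lemma nsteps_above_stuck G C St n c :
  (forall c', step (G, C, St) c' -> ~ extends St (cstack c')) ->
  nsteps_above St n (G, C, St) c -> c = (G, C, St).
Proof.
  intros Hstuck Hrun. inversion Hrun as [| ? ? c' ? _ Hstep Hrest]; subst; auto.
  exfalso. exact (Hstuck c' Hstep (nsteps_above_extends _ _ _ _ Hrest)).
Qed.

Lemma step_from_whnf_not_above G w St :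
  is_whnf w -> forall c', step (G, CEval w, St) c' -> ~ extends St (cstack c').
Proof.
  intros Hw c' Hstep. inversion Hstep; subst; simpl in *;
    solve [contradiction | apply not_extends_cons | destruct Hw; congruence].
Qed.

Lemma step_from_result_not_above G A r St :
  A = [] \/ r = RFail ->
  forall c', step (G, CMatch A (of_result r), St) c' -> ~ extends St (cstack c').
Proof.
  intros HA c' Hstep. destruct r; inversion Hstep; subst; simpl in *;
    solve [apply not_extends_cons | destruct HA; congruence].
Qed.

Lemma nsteps_above_from_whnf G w St n D w' :
  nsteps_above St n (G, CEval w, St) (D, CEval w', St) -> is_whnf w ->
  D = G /\ w' = w.
Proof.
  intros Hrun Hw.
  apply nsteps_above_stuck in Hrun; [| exact (step_from_whnf_not_above _ _ _ Hw)].
  now injection Hrun as -> ->.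
Qed.

Lemma nsteps_above_from_result G r St n D A' r' :
  nsteps_above St n (G, CMatch [] (of_result r), St)
    (D, CMatch A' (of_result r'), St) ->
  D = G /\ r' = r.
Proof.
  intros Hrun.
  apply nsteps_above_stuck in Hrun;
    [| exact (step_from_result_not_above _ _ _ _ (or_introl eq_refl))].
  injection Hrun as -> _ Hr.
  split; [reflexivity |]. destruct r, r'; simpl in Hr; congruence.
Qed.

Lemma upd_incl_vars_stack St : incl (upd St) (vars_stack St).
Proof.
  intros v. induction St as [|k St IH]; [contradiction |].
  destruct k; simpl; intros Hv; try destruct Hv as [<- | Hv]; auto using in_or_app.
Qed.

Definition eval_sound n := forall G e St D w,
  is_whnf w ->
  nsteps_above St n (G, CEval e, St) (D, CEval w, St) ->
  bs G (upd St) e D w.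

(* A run may end in [match A' fail] with [A' <> []]: that is how the first
   alternative of [m1 | m2] fails before the pop by (Alt2). *)
Definition match_sound n := forall G A m St D A' r,
  A' = [] \/ r = RFail ->
  nsteps_above St n (G, CMatch A m, St) (D, CMatch A' (of_result r), St) ->
  bsm G (upd St) A m D r.

(* Inverting a step from [k :: St] into [St] leaves impossible equations
   such as [St = k' :: k :: St]. *)
Ltac stack_length_contra :=
  match goal with
  | H : _ = _ |- _ =>
      apply (f_equal (@length cont)) in H; simpl in H;
      rewrite ?length_app in H; simpl in H; lia
  end.

Ltac pop_below_contra :=
  match goal with
  | H : nsteps_above _ _ _ _ |- _ =>
      apply nsteps_above_extends in H; simpl in H;
      exfalso; exact (not_extends_cons _ _ H)
  end.

Definition sound_below n := forall n', n' < n -> eval_sound n' /\ match_sound n'.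

Lemma eval_sound_of_below n : sound_below n -> eval_sound n.
Proof.
  intros IH G e St D w Hw Hrun.
  inversion Hrun as [? _ | n' ? c' ? _ Hstep Hrest]; subst; [now constructor |].
  destruct e; inversion Hstep; subst; try pop_below_contra;
    destruct (nsteps_above_push_split _ _ _ _ _ _ Hrest eq_refl)
      as (n1 & n2 & G1 & C1 & G2 & C2 & Hin & Hpop & Hout & ->);
    inversion Hpop; subst; try stack_length_contra.
  - eapply nsteps_above_from_whnf in Hout as [-> ->]; [| eassumption].
    apply BS_Var.
    apply (proj1 (IH n1 ltac:(lia)) _ _ (KUpd x :: St)); assumption.
  - eapply BS_App.
    + apply (proj1 (IH n1 ltac:(lia)) _ _ (KArg y :: St)); [eexists |]; eauto.
    + eapply (proj1 (IH n2 ltac:(lia))); [eassumption | exact Hout].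
  - eapply BS_Sat; [eassumption | |].
    + apply (proj2 (IH n1 ltac:(lia)) _ _ _ (KSat :: St) _ [] (RRet _));
        [left | exact Hin]; reflexivity.
    + eapply (proj1 (IH n2 ltac:(lia))); [eassumption | exact Hout].
Qed.

Lemma match_sound_cons n G y A c ps m St D A' r :
  sound_below (S n) -> A' = [] \/ r = RFail ->
  nsteps_above St n (G, CEval (EVar y), KCons A c ps m :: St)
    (D, CMatch A' (of_result r), St) ->
  bsm G (upd St) (y :: A) (MPat (PCon c ps) m) D r.
Proof.
  intros IH HA Hrest.
  destruct (nsteps_above_push_split _ _ _ _ _ _ Hrest eq_refl)
    as (n1 & n2 & G1 & C1 & G2 & C2 & Hin & Hpop & Hout & ->).
  inversion Hpop; subst; try stack_length_contra.
  - eapply BSM_Cons1; [eassumption | |].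
    + apply (proj1 (IH n1 ltac:(lia)) _ _ (KCons A c ps m :: St));
        [exact I | exact Hin].
    + eapply (proj2 (IH n2 ltac:(lia))); [exact HA | exact Hout].
  - destruct (nsteps_above_from_result _ RFail _ _ _ _ _ Hout) as [-> ->].
    eapply BSM_Cons2; [eassumption |].
    apply (proj1 (IH n1 ltac:(lia)) _ _ (KCons A c ps m :: St));
      [exact I | exact Hin].
Qed.

Lemma match_sound_alt n G A m1 m2 St D A' r :
  sound_below (S n) -> A' = [] \/ r = RFail ->
  nsteps_above St n (G, CMatch A m1, KAlt A m2 :: St)
    (D, CMatch A' (of_result r), St) ->
  bsm G (upd St) A (MAlt m1 m2) D r.
Proof.
  intros IH HA Hrest.
  destruct (nsteps_above_push_split _ _ _ _ _ _ Hrest eq_refl)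
    as (n1 & n2 & G1 & C1 & G2 & C2 & Hin & Hpop & Hout & ->).
  inversion Hpop; subst; try stack_length_contra.
  - destruct (nsteps_above_from_result _ (RRet e) _ _ _ _ _ Hout) as [-> ->].
    apply BSM_Alt1.
    apply (proj2 (IH n1 ltac:(lia)) _ _ _ (KAlt A m2 :: St) _ [] (RRet _));
      [left | exact Hin]; reflexivity.
  - eapply BSM_Alt2.
    + change MFail with (of_result RFail) in Hin.
      eapply (proj2 (IH n1 ltac:(lia)) _ _ _ (KAlt A m2 :: St));
        [right; reflexivity | exact Hin].
    + eapply (proj2 (IH n2 ltac:(lia))); [exact HA | exact Hout].
Qed.

Lemma match_sound_of_below n : sound_below n -> match_sound n.
Proof.
  intros IH G A m St D A' r HA Hrun.
  inversion Hrun as [? _ | n' ? c' ? _ Hstep Hrest]; subst.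
  - destruct r as [e|]; simpl in *; [| constructor].
    destruct HA as [-> | ]; [ | discriminate]. exact (BSM_Return _ _ [] e).
  - destruct m; [| | destruct p | | |]; inversion Hstep; subst;
      try pop_below_contra.
    + destruct (nsteps_above_from_result _ (RRet (app_args A e)) _ _ _ _ _ Hrest)
        as [-> ->].
      constructor.
    + apply BSM_Bind. eapply (proj2 (IH n' ltac:(lia))); [exact HA | exact Hrest].
    + exact (match_sound_cons _ _ _ _ _ _ _ _ _ _ _ IH HA Hrest).
    + apply BSM_Arg. eapply (proj2 (IH n' ltac:(lia))); [exact HA | exact Hrest].
    + exact (match_sound_alt _ _ _ _ _ _ _ _ _ IH HA Hrest).
    + eapply BSM_Where; [eassumption | eassumption | |].
      * intros v Hv.
        match goal with Hfresh : forall y, In y _ -> _ |- _ =>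
          destruct (Hfresh v Hv) as (Hheap & HnotA & Hnotm & Hnot) end.
        split; [exact Hheap |]. split; [| split; assumption].
        intros Hupd. exact (Hnot (upd_incl_vars_stack St v Hupd)).
      * eapply (proj2 (IH n' ltac:(lia))); [exact HA | exact Hrest].
Qed.

Lemma machine_sound n : eval_sound n /\ match_sound n.
Proof.
  induction n as [n IH] using lt_wf_ind.
  split; [apply eval_sound_of_below | apply match_sound_of_below]; exact IH.
Qed.

Theorem theorem4p5 :
  (forall (G : heap) (e : expr) (S : stack) (D : heap) (w : expr),
      finite_heap G -> is_whnf w ->
      balanced G (CEval e) S D (CEval w) ->
      bs G (upd S) e D w) /\
  (forall (G : heap) (A : list var) (m : matching) (S : stack) (D : heap) (r : result),
      finite_heap G ->
      balanced G (CMatch A m) S D (CMatch nil (of_result r)) ->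
      bsm G (upd S) A m D r).
Proof.
  split.
  - intros G e St D w _ Hw Hbal.
    destruct (steps_above_nsteps _ _ _ Hbal) as [n Hrun].
    exact (proj1 (machine_sound n) G e St D w Hw Hrun).
  - intros G A m St D r _ Hbal.
    destruct (steps_above_nsteps _ _ _ Hbal) as [n Hrun].
    exact (proj2 (machine_sound n) G A m St D [] r (or_introl eq_refl) Hrun).
Qed.
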